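(* For all words $z\in\{0,1\}^*$ and all integers $k\geq 1$, \[V([z10^k1]_F)=\begin{cases} V([z10^{k+1}]_F), & \text{if } k \text{ is odd};\\ V([z10^k]_F)+V([z(01)^{k/2}]_F), & \text{if } k \text{ is even}.\end{cases}\]
   Context: Fibonacci numbers: $F_0=0$, $F_1=1$, $F_{m+2}=F_{m+1}+F_m$. For a word $k_m\cdots k_0$ of nonnegative integer digits, $[k_m\cdots k_0]_F=\sum_{i=0}^m k_iF_{i+2}$; $u^j$ denotes $j$ concatenated copies of $u$. Standard Fibonacci words: $f_{-1}=b$, $f_0=a$, $f_{m+1}=f_mf_{m-1}$. The Fibonacci word ${\bf f}=\lim f_m$, with prefix of length $j$ denoted ${\bf f}(0..j]$. $V(N)$ is the number of factorizations of ${\bf f}(0..N]$ as $f_m^{k_m}\cdots f_0^{k_0}$ with all $k_i\geq 0$ (into standard words $f_i$, $i\geq0$, in non-strictly decreasing order of index), counted up to leading zero exponents; $V(0)=1$. *)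

From mathcomp Require Import all_boot.
Set Implicit Arguments. Unset Strict Implicit. Unset Printing Implicit Defensive.

Fixpoint fib (n : nat) : nat :=
  match n with
  | 0 => 0
  | 1 => 1
  | (m.+1 as p).+1 => fib p + fib m
  end.

(* [k_m ... k_0]_F = sum_i k_i F_{i+2}; the word is written most significant
   digit first, so k_i is the i-th letter of the reversed word. *)
Definition fibval (w : seq nat) : nat :=
  \sum_(i < size w) nth 0 (rev w) i * fib i.+2.

(* Letters: a = false, b = true. *)
Definition la : bool := false.
Definition lb : bool := true.

(* Standard Fibonacci words: fibw m = f_m for m >= 0,
   f_0 = a, f_1 = f_0 f_{-1} = ab, f_{m+2} = f_{m+1} f_m. *)
Fixpoint fibw (m : nat) : seq bool :=
  match m with
  | 0 => [:: la]
  | 1 => [:: la; lb]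
  | (p.+1 as q).+1 => fibw q ++ fibw p
  end.

(* The infinite Fibonacci word f = lim f_m, as a function of positions
   (f_i has length F_{i+2} > i and f_m is a prefix of f_{m+1}). *)
Definition fibinf (i : nat) : bool := nth la (fibw i) i.

Definition fibpref (N : nat) : seq bool := mkseq fibinf N.

Definition factword (N : nat) (k : {ffun 'I_N -> 'I_N.+1}) : seq bool :=
  flatten [seq flatten (nseq (k i) (fibw i)) | i <- rev (enum 'I_N)].

(* V(N): number of factorizations f(0..N] = f_m^{k_m} ... f_0^{k_0}, counted
   up to leading zero exponents.  Every such factorization has k_i = 0 for
   i >= N (since |f_i| = F_{i+2} > N there) and k_i <= N, so factorizations
   correspond exactly to exponent vectors k : 'I_N -> 'I_N.+1. *)
Definition V (N : nat) : nat :=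
  #|[pred k : {ffun 'I_N -> 'I_N.+1} | factword k == fibpref N]|.

From mathcomp Require Import all_boot.
From mathcomp Require Import zify.
Set Implicit Arguments. Unset Strict Implicit. Unset Printing Implicit Defensive.

(* Let phi be the Fibonacci morphism a -> ab, b -> a, so that f_(i+1) = phi f_i.
   A factorization f_(n-1)^k_(n-1) ... f_0^k_0 of a word u is
   phi (f_(n-2)^k_(n-1) ... f_0^k_1) a^k_0, and phi is injective, so the number
   V(u) of factorizations of an arbitrary word u is the sum of V(v) over the
   decompositions u = phi(v) a^x.  As phi(b) = a, this yields
     V(phi(w) a) = V(phi(w)) + V(w b),   V(phi(w a)) = V(w a),   V(w b b) = 0.
   The prefix of f of length [d]_F is obtained from the empty word by the steps
   w -> phi(w) a^c, one for each digit c of d, most significant first.  For the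
   digits z10^k1 this gives phi(W) a with W the word of z10^k; W ends in ab when
   k is odd, and W = phi(U) a with U = phi(w b) the word of z(01)^(k/2) when k
   is even, so the three identities above give both cases. *)

Lemma eqseq_catr (T : eqType) (s1 s2 t : seq T) : (s1 ++ t == s2 ++ t) = (s1 == s2).
Proof. by rewrite -(can_eq revK) !rev_cat eqseq_cat // eqxx (can_eq revK). Qed.

Lemma nth_prefix (T : eqType) (x0 : T) s t i :
  prefix s t -> i < size s -> nth x0 s i = nth x0 t i.
Proof. by move=> /prefixP [t' ->] lt_is; rewrite nth_cat lt_is. Qed.

Definition exps m L (k : {ffun 'I_m -> 'I_L}) : seq nat :=
  [seq (k i : nat) | i <- enum 'I_m].

Fixpoint count_exps (m L : nat) (Q : pred (seq nat)) : nat :=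
  if m is m'.+1 then \sum_(x < L) count_exps m' L (fun s => Q ((x : nat) :: s)) else Q [::].

Lemma count_exps_S m L (Q : pred (seq nat)) :
  count_exps m.+1 L Q = \sum_(x < L) count_exps m L (fun s => Q ((x : nat) :: s)).
Proof. by []. Qed.

Lemma eq_count_exps m L (Q1 Q2 : pred (seq nat)) :
  Q1 =1 Q2 -> count_exps m L Q1 = count_exps m L Q2.
Proof.
elim: m Q1 Q2 => [|m IH] Q1 Q2 eqQ /=; first by rewrite eqQ.
by apply: eq_bigr => x _; apply: IH => s; apply: eqQ.
Qed.

Lemma count_exps_pred0 m L (Q : pred (seq nat)) : Q =1 pred0 -> count_exps m L Q = 0.
Proof.
elim: m Q => [|m IH] Q Q0 /=; first by rewrite Q0.
by rewrite big1 // => x _; apply: IH => s; apply: Q0.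
Qed.

Lemma count_exps_widen m L (Q : pred (seq nat)) :
  (forall s, Q s -> all (fun x => x < L) s) -> count_exps m L.+1 Q = count_exps m L Q.
Proof.
elim: m Q => [|m IH] Q QL //=.
rewrite big_ord_recr /= count_exps_pred0 ?addn0 => [|s]; last first.
  by apply/negbTE/negP => /QL /=; rewrite ltnn.
by apply: eq_bigr => x _; apply: IH => s /QL /= /andP [].
Qed.

Lemma count_exps_rcons0 m L (Q : pred (seq nat)) : 0 < L ->
  (forall s x, size s = m -> Q (rcons s x) -> x = 0) ->
  count_exps m.+1 L Q = count_exps m L (fun s => Q (rcons s 0)).
Proof.
case: L => // L _; elim: m Q => [|m IH] Q Q0.
  rewrite /= big_ord_recl big1 ?addn0 // => x _.
  by case Qx: (Q _) => //; have := Q0 [::] _ erefl Qx.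
rewrite count_exps_S [RHS]count_exps_S.
apply: eq_bigr => x _; apply: IH => s y size_s /(Q0 ((x : nat) :: s)).
by apply; rewrite /= size_s.
Qed.

Definition ffun_cons m L (x : 'I_L) (k : {ffun 'I_m -> 'I_L}) :
    {ffun 'I_m.+1 -> 'I_L} :=
  [ffun i => if unlift ord0 i is Some j then k j else x].

Lemma exps_ffun_cons m L x (k : {ffun 'I_m -> 'I_L}) :
  exps (ffun_cons x k) = (x : nat) :: exps k.
Proof.
rewrite /exps enum_ordSl /= ffunE unlift_none -map_comp; congr (_ :: _).
by apply: eq_map => j /=; rewrite ffunE liftK.
Qed.

Lemma ffun_cons_bij m L :
  bijective (fun p : 'I_L * {ffun 'I_m -> 'I_L} => ffun_cons p.1 p.2).
Proof.
exists (fun k : {ffun 'I_m.+1 -> 'I_L} => (k ord0, [ffun j => k (lift ord0 j)])).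
- case=> x k /=; rewrite ffunE unlift_none; congr pair.
  by apply/ffunP => j; rewrite !ffunE liftK.
- move=> k; apply/ffunP => i; rewrite ffunE /=.
  by case: unliftP => [j ->|->] /=; rewrite ?ffunE.
Qed.

Lemma sum_count_exps m L (Q : pred (seq nat)) :
  \sum_(k : {ffun 'I_m -> 'I_L}) Q (exps k) = count_exps m L Q.
Proof.
elim: m Q => [|m IH] Q.
  rewrite (eq_bigr (fun _ => (Q [::] : nat))) => [|k _]; last by rewrite /exps enum_ord0.
  by rewrite sum_nat_const card_ffun (card_ord 0) expn0 mul1n.
rewrite (reindex _ (onW_bij _ (ffun_cons_bij m L))) /=.
rewrite -(pair_bigA _ (fun x k => (Q (exps (ffun_cons x k)) : nat))).
by apply: eq_bigr => x _; rewrite -IH; apply: eq_bigr => k _; rewrite exps_ffun_cons.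
Qed.

Lemma card_count_exps m L (Q : pred (seq nat)) :
  #|[pred k : {ffun 'I_m -> 'I_L} | Q (exps k)]| = count_exps m L Q.
Proof. by rewrite -sum_count_exps -sum1_card big_mkcond. Qed.

Definition phi_letter (c : bool) : seq bool := if c == lb then [:: la] else [:: la; lb].
Definition phi (w : seq bool) : seq bool := flatten (map phi_letter w).

Lemma phi_cons c w : phi (c :: w) = phi_letter c ++ phi w. Proof. by []. Qed.

Lemma phi_cat u v : phi (u ++ v) = phi u ++ phi v.
Proof. by rewrite /phi map_cat flatten_cat. Qed.

Lemma phi_flatten ss : phi (flatten ss) = flatten (map phi ss).
Proof. by elim: ss => //= s ss IH; rewrite phi_cat IH. Qed.

Lemma size_phi w : size (phi w) = size w + count_mem la w.
Proof. by elim: w => //= c w IH; rewrite phi_cons size_cat IH; case: c => /=; lia. Qed.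

Lemma count_phi w : count_mem la (phi w) = size w.
Proof. by elim: w => //= c w IH; rewrite phi_cons count_cat IH; case: c => /=; lia. Qed.

Lemma size_phi_ge w : size w <= size (phi w).
Proof. by elim: w => //= c w IH; rewrite phi_cons size_cat; case: c => /=; lia. Qed.

Lemma size_phi_cons_la w : size (la :: w) < size (phi (la :: w)).
Proof. by rewrite phi_cons /= !ltnS size_phi_ge. Qed.

Lemma phi_head w t : phi w <> lb :: t.
Proof. by case: w => [|[] w]. Qed.

Lemma phi_inj : injective phi.
Proof.
elim=> [|c u IH] [|d v] //=.
- by case: d.
- by case: c.
rewrite !phi_cons; case: c; case: d => /=.
- by case=> /IH ->.
- by case=> /phi_head.
- by case=> /esym /phi_head.
- by case=> /IH ->.
Qed.

Lemma phi_neq_cat_bb w v : phi w <> v ++ [:: lb; lb].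
Proof.
elim/last_ind: w v => [|w c _] v; first by case: v.
by rewrite -cats1 phi_cat => /(congr1 rev); rewrite !rev_cat; case: c.
Qed.

Lemma fibwSS n : fibw n.+2 = fibw n.+1 ++ fibw n. Proof. by []. Qed.

Lemma fibw_phi i : fibw i.+1 = phi (fibw i).
Proof.
elim: i {-2}i (leqnn i) => [|n IH] [|[|i]] // le_in.
by rewrite [in LHS]fibwSS [in RHS]fibwSS phi_cat -!IH //; lia.
Qed.

Lemma fibw_prefix m n : m <= n -> prefix (fibw m) (fibw n).
Proof.
elim: n => [|n IH]; first by rewrite leqn0 => /eqP ->.
rewrite leq_eqVlt => /predU1P [-> | /IH le_mn]; first exact: prefix_refl.
apply: prefix_trans le_mn _; case: n {IH} => // n.
by rewrite fibwSS prefix_prefix.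
Qed.

Lemma size_fibw n : n < size (fibw n).
Proof.
elim: n => // n IH; rewrite fibw_phi size_phi.
have : 0 < count_mem la (fibw n).
  by rewrite -has_count has_pred1 (prefix1s (fibw_prefix (leq0n n))).
lia.
Qed.

(* [fact_word [:: k_0; ...; k_(n-1)]] is f_(n-1)^k_(n-1) ... f_0^k_0: exponents
   are listed from the shortest factor up, which makes the recursion peel off
   the trailing power of f_0 = a. *)
Fixpoint fact_word (s : seq nat) : seq bool :=
  if s is x :: s' then phi (fact_word s') ++ nseq x la else [::].

Lemma fact_word_head s t : fact_word s <> lb :: t.
Proof.
case: s => [|x s] //=.
case: (fact_word s) => [|c w]; first by case: x.
by rewrite phi_cons; case: c.
Qed.

Lemma fact_word_rcons0 s : fact_word (rcons s 0) = fact_word s.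
Proof. by elim: s => //= x s ->. Qed.

Lemma exps_le_size_fact_word s : all (fun x => x <= size (fact_word s)) s.
Proof.
elim: s => //= x s IH; rewrite size_cat size_nseq leq_addl /=.
apply: sub_all IH => y /leq_trans; apply.
exact: leq_trans (size_phi_ge _) (leq_addr _ _).
Qed.

Lemma size_fact_word_rcons s x : 0 < x -> size s < size (fact_word (rcons s x)).
Proof.
move=> x_gt0; elim: s => [|y s IH] /=; first by rewrite size_nseq.
rewrite size_cat; case E: (fact_word (rcons s x)) IH => [|[] w] //.
  by have := fact_word_head E.
by move=> /= IH; have := size_phi_cons_la w; rewrite /=; lia.
Qed.

Lemma fact_word_flatten s : fact_word s =
  flatten [seq flatten (nseq (nth 0 s i) (fibw i)) | i <- rev (iota 0 (size s))].
Proof.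
elim: s => // x s IH.
rewrite [fact_word _]/= IH /= rev_cons map_rcons flatten_rcons /=.
congr (_ ++ _); last by elim: x => //= x ->.
rewrite phi_flatten -(add0n 1) (iotaDl 1 0) -map_rev -!map_comp.
congr flatten; apply: eq_map => i.
by rewrite /comp add1n phi_flatten map_nseq fibw_phi.
Qed.

Lemma factword_fact_word N (k : {ffun 'I_N -> 'I_N.+1}) : factword k = fact_word (exps k).
Proof.
rewrite fact_word_flatten /factword /exps size_map size_enum_ord -val_enum_ord.
rewrite -map_rev -map_comp; congr flatten; apply: eq_map => i /=.
by rewrite (nth_map i) ?size_enum_ord // nth_ord_enum.
Qed.

Definition Vword (u : seq bool) : nat :=
  count_exps (size u) (size u).+1 (fun s => fact_word s == u).

Lemma count_exps_fact_word m L u : size u <= m -> size u < L ->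
  count_exps m L (fun s => fact_word s == u) = Vword u.
Proof.
move=> le_um lt_uL.
have -> : count_exps m L (fun s => fact_word s == u) =
          count_exps m (size u).+1 (fun s => fact_word s == u).
  elim: L lt_uL => // L IH; rewrite ltnS leq_eqVlt => /predU1P [<- // | lt_uL].
  rewrite -(IH lt_uL); apply: count_exps_widen => s /eqP fs_u.
  apply: sub_all (exps_le_size_fact_word s) => x; rewrite fs_u => /leq_ltn_trans; exact.
rewrite /Vword -(subnKC le_um); elim: (m - size u) => [|d IH]; first by rewrite addn0.
rewrite addnS count_exps_rcons0 // => [|s x size_s /eqP fs_u].
  by rewrite -IH; apply: eq_count_exps => s; rewrite fact_word_rcons0.
apply/eqP; rewrite -leqn0 leqNgt; apply/negP => /(size_fact_word_rcons s).
by rewrite fs_u size_s ltnNge leq_addr.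
Qed.

Lemma V_Vword N : V N = Vword (fibpref N).
Proof.
rewrite /V -(count_exps_fact_word (m := N) (L := N.+1)) ?size_mkseq // -card_count_exps.
by apply: eq_card => k; rewrite !inE factword_fact_word.
Qed.

Lemma Vword_unfold u m L : size u <= m -> size u < L ->
  Vword u = \sum_(x < L) count_exps m L (fun s => phi (fact_word s) ++ nseq x la == u).
Proof.
by move=> le_um lt_uL; rewrite -(count_exps_fact_word (m := m.+1) _ lt_uL) ?leqW.
Qed.

Lemma count_exps_phi_eq u v x m L :
  phi v ++ nseq x la = u -> size u <= m -> size u < L ->
  count_exps m L (fun s => phi (fact_word s) ++ nseq x la == u) = Vword v.
Proof.
move=> def_u le_um lt_uL.
have le_vu : size v <= size u.
  by rewrite -def_u size_cat (leq_trans (size_phi_ge v)) ?leq_addr.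
rewrite -(count_exps_fact_word (m := m) (L := L))
  ?(leq_trans le_vu) ?(leq_ltn_trans le_vu) //.
by apply: eq_count_exps => s; rewrite -def_u eqseq_catr (inj_eq phi_inj).
Qed.

Lemma count_exps_phi_neq u x m L : (forall v, phi v ++ nseq x la <> u) ->
  count_exps m L (fun s => phi (fact_word s) ++ nseq x la == u) = 0.
Proof. by move=> no_sol; apply: count_exps_pred0 => s; apply/eqP; apply: no_sol. Qed.

Lemma count_exps_phi_gt u x m L : size u < x ->
  count_exps m L (fun s => phi (fact_word s) ++ nseq x la == u) = 0.
Proof.
move=> lt_ux; apply: count_exps_phi_neq => v /(congr1 size) /eqP.
by rewrite size_cat size_nseq eqn_leq leqNgt (leq_trans lt_ux) ?leq_addl.
Qed.

(* The term x = 0 has the single solution v = w b; the terms x > 0 are the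
   terms of Vword (phi w), shifted by one. *)
Lemma Vword_phiw_a w : Vword (phi w ++ [:: la]) = Vword (phi w) + Vword (w ++ [:: lb]).
Proof.
set n := size (phi w).
have size_u : size (phi w ++ [:: la]) = n.+1 by rewrite size_cat addn1.
rewrite (Vword_unfold (m := n.+1) (L := n.+2)) ?size_u // big_ord_recl addnC.
rewrite (count_exps_phi_eq (v := w ++ [:: lb])) ?cats0 ?phi_cat ?size_u //; congr (_ + _).
rewrite (Vword_unfold (u := phi w) (m := n.+1) (L := n.+2)) // [RHS]big_ord_recr.
rewrite count_exps_phi_gt // Monoid.mulm1; apply: eq_bigr => i _; apply: eq_count_exps => s.
by rewrite lift0 -addn1 nseqD catA eqseq_catr.
Qed.

Lemma Vword_last_b u : last la u = lb ->
  Vword u = count_exps (size u) (size u).+1 (fun s => phi (fact_word s) == u).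
Proof.
move=> u_lb; rewrite (Vword_unfold (m := size u) (L := (size u).+1)) //.
rewrite big_ord_recl big1 ?addn0 => [|i _].
  by apply: eq_count_exps => s; rewrite cats0.
apply: count_exps_phi_neq => v def_u; move: u_lb; rewrite -def_u last_cat /=.
by elim: (i : nat).
Qed.

Lemma Vword_phi_wa w : Vword (phi (w ++ [:: la])) = Vword (w ++ [:: la]).
Proof.
rewrite Vword_last_b; last by rewrite phi_cat last_cat.
rewrite (eq_count_exps _ _ (fun s => inj_eq phi_inj _ _)).
by rewrite count_exps_fact_word ?ltnS ?size_phi_ge.
Qed.

Lemma Vword_bb w : last la w = lb -> Vword (w ++ [:: lb]) = 0.
Proof.
move=> w_lb; rewrite Vword_last_b ?last_cat //.
apply: count_exps_pred0 => s; apply/eqP; case/lastP: w w_lb => // w c /=.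
by rewrite last_rcons => ->; rewrite -cats1 -catA; apply: phi_neq_cat_bb.
Qed.

Lemma Vword_phi_wb_a w :
  Vword (phi (w ++ [:: lb]) ++ [:: la]) = Vword (phi (w ++ [:: lb])).
Proof. by rewrite Vword_phiw_a Vword_bb ?addn0 // last_cat. Qed.

Definition digit_word (d : seq nat) : seq bool :=
  foldl (fun w c => phi w ++ nseq c la) [::] d.

Lemma digit_word_rcons d c : digit_word (rcons d c) = phi (digit_word d) ++ nseq c la.
Proof. exact: foldl_rcons. Qed.

Definition fibsum (s : nat) (d : seq nat) : nat :=
  \sum_(i < size d) nth 0 (rev d) i * fib (i + s).

Lemma fibval_fibsum d : fibval d = fibsum 2 d.
Proof. by apply: eq_bigr => i _; rewrite addn2. Qed.

Lemma fibsum_rcons s d c : fibsum s (rcons d c) = c * fib s + fibsum s.+1 d.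
Proof.
rewrite /fibsum size_rcons big_ord_recl rev_rcons; congr (_ + _).
by apply: eq_bigr => i _; rewrite lift0 addSnnS.
Qed.

Lemma fibsumSS s d : fibsum s.+2 d = fibsum s.+1 d + fibsum s d.
Proof. by rewrite /fibsum -big_split; apply: eq_bigr => i _; rewrite !addnS mulnDr. Qed.

Lemma size_digit_word d : size (digit_word d) = fibval d.
Proof.
suff : size (digit_word d) = fibsum 2 d /\ count_mem la (digit_word d) = fibsum 1 d.
  by rewrite fibval_fibsum => -[].
elim/last_ind: d => [|d c [IH1 IH2]]; first by rewrite /fibsum !big_ord0.
rewrite digit_word_rcons !fibsum_rcons size_cat count_cat size_nseq count_nseq.
by rewrite size_phi count_phi fibsumSS IH1 IH2 /=; lia.
Qed.

Lemma fibinf_nth n j : j < size (fibw n) -> fibinf j = nth la (fibw n) j.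
Proof.
move=> lt_jn; rewrite /fibinf.
rewrite (nth_prefix _ (fibw_prefix (leq_maxl j n))) ?size_fibw //.
by rewrite (nth_prefix _ (fibw_prefix (leq_maxr j n))).
Qed.

Lemma fibpref_prefix w n : prefix w (fibw n) -> fibpref (size w) = w.
Proof.
move=> pre_w; apply: (@eq_from_nth _ la); rewrite size_mkseq // => i lt_iw.
rewrite nth_mkseq // (nth_prefix _ pre_w) //; apply: fibinf_nth.
exact: leq_trans lt_iw (size_prefix pre_w).
Qed.

Definition binary (d : seq nat) : bool := all (fun c => c <= 1) d.

Lemma binary_bits (z : seq bool) : binary (map nat_of_bool z).
Proof. by apply/allP => _ /mapP [b _ ->]; apply: leq_b1. Qed.

Lemma digit_word_prefix d : binary d -> exists n, prefix (digit_word d) (fibw n).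
Proof.
elim/last_ind: d => [|d c IH]; first by exists 0; apply: prefix0s.
rewrite /binary all_rcons => /andP [le_c1 /IH [n pre_n]].
set m := maxn n (size (digit_word d)).
have /prefixP [[|x t] def_m] : prefix (digit_word d) (fibw m).
  exact: prefix_trans pre_n (fibw_prefix (leq_maxl _ _)).
  by have := size_fibw m; rewrite -/m def_m cats0 ltnNge leq_maxr.
exists m.+1; rewrite digit_word_rcons fibw_phi def_m phi_cat phi_cons catA.
apply: prefix_catl; rewrite prefix_catr // eqxx /=.
by case: c le_c1 => [|[]] // _; case: x {def_m}.
Qed.

Lemma V_digit_word d : binary d -> V (fibval d) = Vword (digit_word d).
Proof.
by case/digit_word_prefix => n /fibpref_prefix; rewrite V_Vword size_digit_word => ->.
Qed.

Lemma digit_word_cat_01 d :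
  digit_word (d ++ [:: 0; 1]) = phi (phi (digit_word d) ++ [:: lb]).
Proof.
have -> : d ++ [:: 0; 1] = rcons (rcons d 0) 1 by rewrite -!cats1 -catA.
by rewrite !digit_word_rcons /= cats0 phi_cat.
Qed.

Lemma digit_word_zerosS d k :
  digit_word (d ++ 1 :: nseq k.+1 0) = phi (digit_word (d ++ 1 :: nseq k 0)).
Proof.
have -> : d ++ 1 :: nseq k.+1 0 = rcons (d ++ 1 :: nseq k 0) 0.
  by rewrite -cats1 -catA -(addn1 k) nseqD.
by rewrite digit_word_rcons cats0.
Qed.

Lemma digit_word_zeros_even d j : digit_word (d ++ 1 :: nseq j.*2 0) =
  phi (digit_word (d ++ flatten (nseq j [:: 0; 1]))) ++ [:: la].
Proof.
elim: j => [|j IH]; first by rewrite /= cats0 cats1 digit_word_rcons.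
rewrite doubleS !digit_word_zerosS IH -(addn1 j) nseqD flatten_cat /=.
by rewrite catA digit_word_cat_01 !phi_cat -!catA.
Qed.

Lemma digit_word_zeros_odd d j : digit_word (d ++ 1 :: nseq j.*2.+1 0) =
  phi (phi (digit_word (d ++ flatten (nseq j [:: 0; 1])))) ++ [:: la; lb].
Proof. by rewrite digit_word_zerosS digit_word_zeros_even phi_cat. Qed.

Theorem proposition4 (z : seq bool) (k : nat) : 0 < k ->
  let z' := map nat_of_bool z in
  V (fibval (z' ++ [:: 1] ++ nseq k 0 ++ [:: 1])) =
  if odd k then V (fibval (z' ++ [:: 1] ++ nseq k.+1 0))
  else V (fibval (z' ++ [:: 1] ++ nseq k 0))
       + V (fibval (z' ++ flatten (nseq k./2 [:: 0; 1]))).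
Proof.
move=> k_gt0 z'; have bin_z' d : binary d -> binary (z' ++ d).
  by rewrite /binary all_cat => ->; rewrite andbT; apply: binary_bits.
have bin_zeros n : all (fun c => c <= 1) (nseq n 0) by elim: n.
rewrite !V_digit_word ?bin_z' // ?/binary ?all_cat ?bin_zeros //;
  last by elim: (k./2) => //= j ->.
have -> : z' ++ [:: 1] ++ nseq k 0 ++ [:: 1] = rcons (z' ++ 1 :: nseq k 0) 1.
  by rewrite -cats1 -!catA.
rewrite digit_word_rcons Vword_phiw_a.
case: (boolP (odd k)) => [odd_k | even_k].
  rewrite digit_word_zerosS Vword_bb ?addn0 //.
  by rewrite -(odd_double_half k) odd_k digit_word_zeros_odd last_cat.
have [j def_k] : exists j, k = j.+1.*2.
  exists k./2.-1; rewrite prednK; first by rewrite -[LHS]odd_double_half (negbTE even_k).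
  by rewrite half_gt0; case: k k_gt0 even_k => [|[]].
rewrite def_k doubleK digit_word_zeros_even Vword_phi_wa; congr (_ + _).
rewrite -catA -[[:: la] ++ _]/(phi [:: la]) -phi_cat Vword_phi_wa.
by rewrite -(addn1 j) nseqD flatten_cat catA digit_word_cat_01 Vword_phi_wb_a.
Qed.
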